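(* Let $Q$ be a quiver without oriented cycles and $v_0\in Q_0$ a vertex whose only incident arrows are arrows $a_1,\dots,a_l$ with $ta_i=v_i$, $ha_i=v_0$, and a single arrow $b$ with $tb=v_0$, $hb=w$. Let $\beta$ be a dimension vector and $\sigma\in\mathbb{Z}^{Q_0}$ a weight with $\beta(v_0)\ge\beta(w)$ and $\sigma(v_0)=0$. Let $\overline{Q}$ be the quiver with $\overline{Q}_0=Q_0\setminus\{v_0\}$ and $\overline{Q}_1=(Q_1\setminus\{b,a_1,\dots,a_l\})\cup\{ba_1,\dots,ba_l\}$, where $ba_i$ is a new arrow from $v_i$ to $w$. Let $\overline\beta,\overline\sigma$ be the restrictions of $\beta,\sigma$ to $\overline{Q}_0$. Then $\operatorname{SI}(Q,\beta)_\sigma\cong\operatorname{SI}(\overline{Q},\overline\beta)_{\overline\sigma}$. The same holds with the orientations of all the arrows $a_i$ and $b$ reversed.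
   Context: Work over an algebraically closed field $k$ of characteristic zero. $\operatorname{SI}(Q,\beta)_\sigma$ is the space of polynomial functions $f$ on $\operatorname{Rep}(Q,\beta)=\bigoplus_a\operatorname{Hom}_k(k^{\beta(ta)},k^{\beta(ha)})$ satisfying $g\cdot f=\sigma(g)f$ for all $g\in\operatorname{GL}(\beta)=\prod_x\operatorname{GL}(\beta(x))$, where $\operatorname{GL}(\beta)$ acts by $(g\cdot W)(a)=g(ha)W(a)g(ta)^{-1}$ and $\sigma(g)=\prod_x\det(g(x))^{\sigma(x)}$. *)

From HB Require Import structures.
From mathcomp Require Import all_boot all_order all_algebra.
Unset Printing Implicit Defensive.
Import Order.TTheory GRing.Theory Num.Theory.
Local Open Scope ring_scope.

Record quiver := Quiver {
  qV : finType; qA : finType; qt : qA -> qV; qh : qA -> qV }.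
Arguments qt {q} a.
Arguments qh {q} a.
Arguments Quiver {qV qA} qt qh.

Definition qedge (Q : quiver) : rel (qV Q) :=
  fun x y => [exists a : qA Q, (qt a == x) && (qh a == y)].

Definition acyclic (Q : quiver) : Prop :=
  forall a : qA Q, ~~ connect (qedge Q) (qh a) (qt a).

Section Reps.
Variable k : fieldType.

(* Rep(Q,beta) = (+)_a Hom(k^{beta(ta)}, k^{beta(ha)}), matrices acting on columns *)
Definition Rep (Q : quiver) (beta : qV Q -> nat) : Type :=
  forall a : qA Q, 'M[k]_(beta (qh a), beta (qt a)).

Inductive polyfun (Q : quiver) (beta : qV Q -> nat) : (Rep Q beta -> k) -> Prop :=
| pf_const (c : k) : polyfun Q beta (fun _ => c)
| pf_coord (a : qA Q) (i : 'I_(beta (qh a))) (j : 'I_(beta (qt a))) :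
    polyfun Q beta (fun W => W a i j)
| pf_add f g : polyfun Q beta f -> polyfun Q beta g -> polyfun Q beta (fun W => f W + g W)
| pf_mul f g : polyfun Q beta f -> polyfun Q beta g -> polyfun Q beta (fun W => f W * g W).

Definition GLfam (Q : quiver) (beta : qV Q -> nat) := forall x : qV Q, 'M[k]_(beta x).

Definition is_GL (Q : quiver) (beta : qV Q -> nat) (g : GLfam Q beta) : Prop :=
  forall x, g x \in unitmx.

Definition act (Q : quiver) (beta : qV Q -> nat) (g : GLfam Q beta) (W : Rep Q beta)
  : Rep Q beta := fun a => g (qh a) *m W a *m invmx (g (qt a)).

Definition GLinv (Q : quiver) (beta : qV Q -> nat) (g : GLfam Q beta) : GLfam Q beta :=
  fun x => invmx (g x).

Definition charac (Q : quiver) (beta : qV Q -> nat) (sigma : qV Q -> int)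
  (g : GLfam Q beta) : k := \prod_(x : qV Q) (\det (g x)) ^ (sigma x).

(* SI(Q,beta)_sigma : polynomial f with g.f = sigma(g) f, where (g.f)(W) = f(g^{-1}.W) *)
Definition SI (Q : quiver) (beta : qV Q -> nat) (sigma : qV Q -> int)
  (f : Rep Q beta -> k) : Prop :=
  polyfun Q beta f /\
  forall g : GLfam Q beta, is_GL Q beta g ->
    forall W, f (act Q beta (GLinv Q beta g) W) = charac Q beta sigma g * f W.

Definition SI_iso (Q : quiver) (beta : qV Q -> nat) (sigma : qV Q -> int)
  (Q' : quiver) (beta' : qV Q' -> nat) (sigma' : qV Q' -> int) : Prop :=
  exists F : (Rep Q beta -> k) -> (Rep Q' beta' -> k),
    [/\ (forall (c : k) f1 f2,
          F (fun W => c * f1 W + f2 W) = (fun W' => c * F f1 W' + F f2 W')),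
        (forall f, SI Q beta sigma f -> SI Q' beta' sigma' (F f)),
        (forall f1 f2, SI Q beta sigma f1 -> SI Q beta sigma f2 -> F f1 = F f2 -> f1 = f2) &
        (forall f', SI Q' beta' sigma' f' -> exists2 f, SI Q beta sigma f & F f = f')].
End Reps.

Section Contract.
Variables (Q : quiver) (v0 w : qV Q) (hw : w != v0).

Definition barV : finType := {x : qV Q | x != v0}.

Definition keepP : pred (qA Q) := fun a => (qt a != v0) && (qh a != v0).
Definition inP : pred (qA Q) := fun a => (qh a == v0) && (qt a != v0).
Definition outP : pred (qA Q) := fun a => (qt a == v0) && (qh a != v0).

Lemma keep_t (a : {a | keepP a}) : qt (val a) != v0.
Proof. by case/andP: (valP a). Qed.
Lemma keep_h (a : {a | keepP a}) : qh (val a) != v0.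
Proof. by case/andP: (valP a). Qed.
Lemma in_t (a : {a | inP a}) : qt (val a) != v0.
Proof. by case/andP: (valP a). Qed.
Lemma out_h (a : {a | outP a}) : qh (val a) != v0.
Proof. by case/andP: (valP a). Qed.

Definition barW : barV := exist _ w hw.

(* forward: arrows of Q not incident to v0, plus composites b a_i : v_i -> w *)
Definition barA : finType := ({a | keepP a} + {a | inP a})%type.
Definition bar_t (e : barA) : barV :=
  match e with
  | inl a => exist _ (qt (val a)) (keep_t a)
  | inr a => exist _ (qt (val a)) (in_t a)
  end.
Definition bar_h (e : barA) : barV :=
  match e with
  | inl a => exist _ (qh (val a)) (keep_h a)
  | inr a => barW
  end.
Definition Qbar : quiver := Quiver bar_t bar_h.

(* reversed: composites a_i b : w -> v_i *)
Definition barA' : finType := ({a | keepP a} + {a | outP a})%type.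
Definition bar_t' (e : barA') : barV :=
  match e with
  | inl a => exist _ (qt (val a)) (keep_t a)
  | inr a => barW
  end.
Definition bar_h' (e : barA') : barV :=
  match e with
  | inl a => exist _ (qh (val a)) (keep_h a)
  | inr a => exist _ (qh (val a)) (out_h a)
  end.
Definition Qbar_rev : quiver := Quiver bar_t' bar_h'.

Definition restr (T : Type) (f : qV Q -> T) : barV -> T := fun x => f (val x).
End Contract.
Arguments restr {Q} v0 {T} f x.

From HB Require Import structures.
From mathcomp Require Import all_boot all_order all_algebra.
From Stdlib Require Import FunctionalExtensionality.

(* Write n = beta(v0) >= m = beta(w), B = W(b) : n -> m and A_i = W(a_i). A
   semi-invariant f of weight sigma with sigma(v0) = 0 is invariant under
   GL_n acting at v0 by (B, A) |-> (B G, G^-1 A). The key fact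
   (invariant_normal_form) is that such a function, being polynomial, only
   depends on the products B A_i: for B whose leading m x m block is
   invertible one moves B to E = [1 0] by GL_n and lets the remaining
   dilations degenerate, and a generic line B + tE extends this to all B.
   Consequently f = f o expand o contract, where contract sends W to the
   representation of Qbar with arrows B A_i, and expand puts E on b. A
   general transfer principle (SI_iso_transfer) then turns such a polynomial
   retraction, equivariant for the restriction GL(beta) -> GL(beta bar), into
   an isomorphism of spaces of semi-invariants. The reversed orientation is
   the transposed argument. *)

Set Implicit Arguments. Unset Strict Implicit. Unset Printing Implicit Defensive.
Import Order.TTheory GRing.Theory Num.Theory.
Local Open Scope ring_scope.

Section CharZeroPoly.
Variable k : fieldType.
Hypothesis hchar : [pchar k] =i pred0.

Lemma natr_inj : injective (fun n : nat => n%:R : k).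
Proof.
move=> i j /= e; apply/eqP; move: e.
wlog lt_ij : i j / (i <= j)%N => [H|].
  by case/orP: (leq_total i j) => /H // H' /esym /H'; rewrite eq_sym.
move=> e; have := (pcharf0P _).1 hchar (j - i)%N.
rewrite natrB // e subrr eqxx subn_eq0 => /esym ji; by rewrite eqn_leq lt_ij ji.
Qed.

Lemma poly_eq0_natS (q : {poly k}) : (forall n, q.[n.+1%:R] = 0) -> q = 0.
Proof.
move=> h; apply: (@roots_geq_poly_eq0 _ q [seq i.+1%:R | i <- iota 0 (size q)]).
- by apply/allP => x /mapP [i _ ->]; rewrite /root h.
- by rewrite map_inj_uniq ?iota_uniq // => i j /natr_inj [].
- by rewrite size_map size_iota.
Qed.

Lemma poly_const_nz (q : {poly k}) c : (forall t, t != 0 -> q.[t] = c) -> q.[0] = c.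
Proof.
move=> h; suff -> : q = c%:P by rewrite hornerC.
apply/eqP; rewrite -subr_eq0; apply/eqP/poly_eq0_natS => n.
rewrite hornerD hornerN hornerC h ?subrr //.
by apply/eqP => /(@natr_inj n.+1 0).
Qed.
End CharZeroPoly.

Notation mxeval t := (map_mx (horner_eval t)).

Section PolyMatrix.
Variable k : fieldType.

Lemma mxeval_const t r c (M : 'M[k]_(r, c)) : mxeval t (map_mx polyC M) = M.
Proof. by apply/matrixP => i j; rewrite !mxE horner_evalE hornerC. Qed.

Lemma mxeval_X t r : mxeval t ('X%:M : 'M[{poly k}]_r) = t%:M.
Proof.
apply/matrixP => i j; rewrite !mxE.
by case: (i == j); rewrite /= ?mulr1n ?mulr0n horner_evalE ?hornerX ?horner0.
Qed.

Lemma char_poly_horner m (M : 'M[k]_m) t : (char_poly M).[t] = \det (t%:M - M).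
Proof.
rewrite /char_poly -horner_evalE -det_map_mx /char_poly_mx.
by rewrite map_mxB mxeval_X mxeval_const.
Qed.

Lemma pid_completion m n (hmn : (m <= n)%N) (B : 'M[k]_(m, n)) :
  B *m (pid_mx m)^T \in unitmx -> exists2 G, G \in unitmx & B *m G = pid_mx m.
Proof.
have := subnKC hmn; move: (n - m)%N => r e; subst n.
rewrite -(hsubmxK B) pid_mx_row tr_row_mx trmx1 trmx0 mul_row_col mulmx1 mulmx0 addr0.
set L := lsubmx B; set R := rsubmx B => uL.
exists (block_mx (invmx L) (- (invmx L *m R)) 0 1%:M).
  apply: (proj1 (@mulmx1_unit _ _ _ (block_mx L R 0 1%:M) _)).
  rewrite mulmx_block !mulmx0 !mul0mx !mulmx1 !add0r addr0 mulVmx //.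
  by rewrite subrr -scalar_mx_block.
rewrite (mul_row_block L R) mulmx0 mulmxV // addr0 mulmxN mulmxA mulmxV //.
by rewrite mul1mx mulmx1 addNr.
Qed.
End PolyMatrix.

Section Dilations.
Variables (k : fieldType) (m n : nat) (hmn : (m <= n)%N).

Local Notation E := (pid_mx m : 'M[k]_(m, n)).

Lemma pid_mx_tr : E *m E^T = 1%:M.
Proof. by rewrite tr_pid_mx pid_mx_id // pid_mx_1. Qed.

Definition lead_proj : 'M[k]_n := E^T *m E.
Definition dil (u : k) : 'M[k]_n := lead_proj + u *: (1%:M - lead_proj).

Lemma pid_proj : E *m lead_proj = E.
Proof. by rewrite /lead_proj mulmxA pid_mx_tr mul1mx. Qed.

Lemma proj_idem : lead_proj *m lead_proj = lead_proj.
Proof. by rewrite {1}/lead_proj -mulmxA pid_proj. Qed.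

Lemma pid_dil u : E *m dil u = E.
Proof.
by rewrite /dil mulmxDr -scalemxAr mulmxBr mulmx1 pid_proj subrr scaler0 addr0.
Qed.

Lemma dilM u v : dil u *m dil v = dil (u * v).
Proof.
have h1 : lead_proj *m (1%:M - lead_proj) = 0 by rewrite mulmxBr mulmx1 proj_idem subrr.
have h2 : (1%:M - lead_proj) *m lead_proj = 0 by rewrite mulmxBl mul1mx proj_idem subrr.
have h3 : (1%:M - lead_proj) *m (1%:M - lead_proj) = 1%:M - lead_proj.
  by rewrite mulmxBl mul1mx h1 subr0.
rewrite /dil mulmxDr !mulmxDl -!scalemxAr -!scalemxAl proj_idem h1 h2 h3.
by rewrite !scaler0 addr0 add0r scalerA mulrC.
Qed.

Lemma dil_unit u : u != 0 -> dil u \in unitmx /\ invmx (dil u) = dil u^-1.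
Proof.
move=> u0; have h : dil u *m dil u^-1 = 1%:M.
  by rewrite dilM mulfV // /dil scale1r addrC subrK.
have uS := (mulmx1_unit h).1; split => //.
by rewrite -[LHS]mulmx1 -h mulmxA mulVmx ?mul1mx.
Qed.

Definition dil_curve : 'M[{poly k}]_n :=
  map_mx polyC lead_proj + 'X%:M *m (1%:M - map_mx polyC lead_proj).

Lemma mxeval_dil_curve u : mxeval u dil_curve = dil u.
Proof.
rewrite map_mxD mxeval_const [X in _ + X]map_mxM mxeval_X map_mxB map_mx1.
by rewrite mxeval_const mul_scalar_mx.
Qed.
End Dilations.

Section GLInvariants.
Variable k : fieldType.
Hypothesis hchar : [pchar k] =i pred0.
Variables (m n : nat) (hmn : (m <= n)%N) (I : finType) (p : I -> nat).

Variable phi : 'M[k]_(m, n) -> (forall i, 'M[k]_(n, p i)) -> k.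
Hypothesis phi_poly :
  forall (PB : 'M[{poly k}]_(m, n)) (PA : forall i, 'M[{poly k}]_(n, p i)),
  exists q : {poly k}, forall t, phi (mxeval t PB) (fun i => mxeval t (PA i)) = q.[t].
Hypothesis phi_inv : forall G : 'M[k]_n, G \in unitmx ->
  forall B A, phi (B *m G) (fun i => invmx G *m A i) = phi B A.

Local Notation E := (pid_mx m : 'M[k]_(m, n)).
Local Notation dil := (@dil k m n).
Local Notation dil_curve := (@dil_curve k m n).

(* When the leading block of B is invertible, move B to E by GL_n and then
   degenerate the remaining freedom by the dilations, using continuity
   (polynomiality) at u = 0. *)
Lemma invariant_generic B A : B *m E^T \in unitmx ->
  phi B A = phi E (fun i => E^T *m (B *m A i)).
Proof.
move=> uB; have [G uG BG] := pid_completion hmn uB.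
rewrite -(phi_inv uG) BG; set A' := fun i => invmx G *m A i.
have hB : B = E *m invmx G by rewrite -BG mulmxK.
have [q hq] := phi_poly (map_mx polyC E) (fun i => dil_curve *m map_mx polyC (A' i)).
have q_dil u : q.[u] = phi E (fun i => dil u *m A' i).
  rewrite -hq mxeval_const; congr (phi _ _).
  by apply: functional_extensionality_dep => i; rewrite map_mxM mxeval_dil_curve mxeval_const.
have q_const u : u != 0 -> q.[u] = phi E A'.
  move=> u0; have [uS iS] := dil_unit hmn (invr_neq0 u0).
  by rewrite q_dil -[in RHS](phi_inv uS) (pid_dil hmn) iS invrK.
rewrite -(poly_const_nz hchar q_const) q_dil; congr (phi _ _).
by apply: functional_extensionality_dep => i; rewrite /dil scale0r addr0 /lead_proj /A' hB -!mulmxA.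
Qed.

(* The generic case extends to
   all B along the line B + tE, whose leading block is invertible for all
   but finitely many t. *)
Lemma invariant_normal_form B A : phi B A = phi E (fun i => E^T *m (B *m A i)).
Proof.
pose PB := map_mx polyC B + 'X%:M *m map_mx polyC E.
have evPB t : mxeval t PB = B + t *: E.
  by rewrite map_mxD map_mxM mxeval_X !mxeval_const mul_scalar_mx.
have [q1 h1] := phi_poly PB (fun i => map_mx polyC (A i)).
have [q2 h2] := phi_poly (map_mx polyC E)
   (fun i => map_mx polyC E^T *m (PB *m map_mx polyC (A i))).
pose d := char_poly (- (B *m E^T)).
have hd t : d.[t] = \det ((B + t *: E) *m E^T).
  by rewrite char_poly_horner opprK addrC mulmxDl -scalemxAl (pid_mx_tr k hmn) scalemx1.
have agree t : d.[t] != 0 -> q1.[t] = q2.[t].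
  move=> dn0; rewrite -h1 -h2 invariant_generic; last by rewrite evPB unitmxE unitfE -hd.
  rewrite mxeval_const evPB; congr (phi _ _); apply: functional_extensionality_dep => i.
  by rewrite !map_mxM !mxeval_const evPB.
have hz : (q1 - q2) * d = 0.
  apply: poly_eq0_natS => // t; rewrite hornerM hornerD hornerN.
  have [d0|dn0] := eqVneq d.[t.+1%:R] 0; first by rewrite d0 mulr0.
  by rewrite agree // subrr mul0r.
have dn0 : d != 0 by apply: monic_neq0; apply: char_poly_monic.
move/eqP: hz; rewrite mulf_eq0 (negPf dn0) orbF subr_eq0 => /eqP e12.
have := h1 0; rewrite evPB scale0r addr0.
have -> : (fun i => mxeval 0 (map_mx polyC (A i))) = A.
  by apply: functional_extensionality_dep => i; rewrite mxeval_const.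
move=> ->; rewrite e12 -h2 mxeval_const; congr (phi _ _).
by apply: functional_extensionality_dep => i; rewrite !map_mxM !mxeval_const evPB scale0r addr0.
Qed.
End GLInvariants.

Lemma invariant_normal_form_tr (k : fieldType) (hchar : [pchar k] =i pred0)
  m n (hmn : (m <= n)%N) (I : finType) (p : I -> nat)
  (phi : 'M[k]_(n, m) -> (forall i, 'M[k]_(p i, n)) -> k) :
  (forall (PB : 'M[{poly k}]_(n, m)) (PA : forall i, 'M[{poly k}]_(p i, n)),
    exists q : {poly k}, forall t, phi (mxeval t PB) (fun i => mxeval t (PA i)) = q.[t]) ->
  (forall G : 'M[k]_n, G \in unitmx ->
    forall B A, phi (invmx G *m B) (fun i => A i *m G) = phi B A) ->
  forall B A, phi B A =
    phi (pid_mx m : 'M_(m, n))^T (fun i => A i *m B *m (pid_mx m : 'M_(m, n))).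
Proof.
move=> phi_poly phi_inv B A.
pose psi (B' : 'M[k]_(m, n)) (A' : forall i, 'M[k]_(n, p i)) :=
  phi B'^T (fun i => (A' i)^T).
have psi_poly : forall (PB : 'M[{poly k}]_(m, n)) (PA : forall i, 'M[{poly k}]_(n, p i)),
    exists q : {poly k}, forall t, psi (mxeval t PB) (fun i => mxeval t (PA i)) = q.[t].
  move=> PB PA; have [q hq] := phi_poly PB^T (fun i => (PA i)^T).
  exists q => t; rewrite -hq /psi map_trmx; congr (phi _ _).
  by apply: functional_extensionality_dep => i; rewrite map_trmx.
have psi_inv : forall G : 'M[k]_n, G \in unitmx ->
    forall B A, psi (B *m G) (fun i => invmx G *m A i) = psi B A.
  move=> G uG B' A'; rewrite /psi.
  have uH : (invmx G)^T \in unitmx by rewrite unitmx_tr unitmx_inv.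
  rewrite -[RHS](phi_inv _ uH); congr (phi _ _).
    by rewrite trmx_mul -trmx_inv invmxK.
  by apply: functional_extensionality_dep => i; rewrite trmx_mul.
have -> : phi B A = psi B^T (fun i => (A i)^T).
  rewrite /psi trmxK; congr (phi _ _).
  by apply: functional_extensionality_dep => i; rewrite trmxK.
rewrite (invariant_normal_form hchar hmn psi_poly psi_inv) /psi; congr (phi _ _).
by apply: functional_extensionality_dep => i; rewrite !trmx_mul !trmxK.
Qed.

(* Matrices whose dimensions agree only propositionally (e.g. beta (qt a) and
   beta v0 when qt a = v0) are converted by reading entries by their
   natural-number indices, with 0 outside the range. *)
Section MatrixCast.
Variable R : nmodType.

Definition mget r c (M : 'M[R]_(r, c)) (i j : nat) : R :=
  match (insub i : option 'I_r), (insub j : option 'I_c) with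
  | Some i', Some j' => M i' j'
  | _, _ => 0
  end.

Definition mcast {r c r' c'} (M : 'M[R]_(r, c)) : 'M[R]_(r', c') :=
  \matrix_(i, j) mget M i j.

Lemma mgetE r c (M : 'M[R]_(r, c)) (i : 'I_r) (j : 'I_c) : mget M i j = M i j.
Proof. by rewrite /mget !valK. Qed.

Lemma mcast_id r c (M : 'M[R]_(r, c)) : mcast M = M.
Proof. by apply/matrixP => i j; rewrite mxE mgetE. Qed.

Lemma mcastK r c r' c' (e1 : r = r') (e2 : c = c') (M : 'M[R]_(r, c)) :
  mcast (mcast M : 'M_(r', c')) = M.
Proof. by subst; rewrite !mcast_id. Qed.
End MatrixCast.

Section MatrixCastRing.
Variable k : fieldType.

Lemma mget_mxeval (t : k) r c (P : 'M[{poly k}]_(r, c)) i j :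
  mget (mxeval t P) i j = (mget P i j).[t].
Proof.
rewrite /mget; case: (insub i : option 'I_r) => [i'|];
  case: (insub j : option 'I_c) => [j'|]; by rewrite ?mxE ?horner0.
Qed.

Lemma mcast_invmull r r' c c' (e1 : r = r') (e2 : c = c') (G : 'M[k]_r) (X : 'M[k]_(r, c)) :
  invmx (mcast G : 'M_r') *m (mcast X : 'M_(r', c')) = mcast (invmx G *m X).
Proof. by subst; rewrite !mcast_id. Qed.

Lemma mcast_mulr r r' c c' (e1 : r = r') (e2 : c = c') (X : 'M[k]_(r, c)) (G : 'M[k]_c) :
  (mcast X : 'M_(r', c')) *m (mcast G : 'M_c') = mcast (X *m G).
Proof. by subst; rewrite !mcast_id. Qed.

Lemma mcast_unit r r' (e : r = r') (G : 'M[k]_r) :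
  G \in unitmx -> (mcast G : 'M_r') \in unitmx.
Proof. by subst; rewrite mcast_id. Qed.

Lemma mcast_conjl (V : Type) (d : V -> nat) (F : forall x, 'M[k]_(d x)) x y (e : x = y)
  c (X : 'M[k]_(d x, c)) (Y : 'M[k]_c) :
  (mcast (F x *m X *m Y) : 'M_(d y, c)) = F y *m mcast X *m Y.
Proof. by subst; rewrite !mcast_id. Qed.

Lemma mcast_conjr (V : Type) (d : V -> nat) (F : forall x, 'M[k]_(d x)) x y (e : x = y)
  r (X : 'M[k]_(r, d x)) (Y : 'M[k]_r) :
  (mcast (Y *m X *m F x) : 'M_(r, d y)) = Y *m mcast X *m F y.
Proof. by subst; rewrite !mcast_id. Qed.
End MatrixCastRing.

Section PolynomialFunctions.
Variables (k : fieldType) (Q : quiver) (beta : qV Q -> nat).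
Local Notation pf := (polyfun k Q beta).

Definition polymx r c (X : Rep k Q beta -> 'M[k]_(r, c)) : Prop :=
  forall i j, pf (fun W => X W i j).

Lemma polyfun_ext (f g : Rep k Q beta -> k) :
  (forall W, f W = g W) -> pf g -> pf f.
Proof. by move=> h; have -> : f = g by apply: functional_extensionality. Qed.

Lemma polyfun_sum (I : Type) (r : seq I) (F : I -> Rep k Q beta -> k) :
  (forall i, pf (F i)) -> pf (fun W => \sum_(i <- r) F i W).
Proof.
move=> h; elim: r => [|x r IH].
  by apply: (polyfun_ext (g := fun _ => 0)) => [W|]; [rewrite big_nil | constructor].
apply: (polyfun_ext (g := fun W => F x W + \sum_(i <- r) F i W)).
  by move=> W; rewrite big_cons.
exact: pf_add.
Qed.

Lemma polymx_const r c (C : 'M[k]_(r, c)) : polymx (fun _ => C).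
Proof. by move=> i j; constructor. Qed.

Lemma polymx_coord (a : qA Q) : polymx (fun W => W a).
Proof. by move=> i j; constructor. Qed.

Lemma polymx_mul r c d (X : Rep k Q beta -> 'M[k]_(r, c)) (Y : Rep k Q beta -> 'M[k]_(c, d)) :
  polymx X -> polymx Y -> polymx (fun W => X W *m Y W).
Proof.
move=> pX pY i j; apply: (polyfun_ext (g := fun W => \sum_(l <- index_enum _) X W i l * Y W l j)).
  by move=> W; rewrite mxE.
by apply: polyfun_sum => l; apply: pf_mul.
Qed.

Lemma polymx_mcast r c r' c' (X : Rep k Q beta -> 'M[k]_(r, c)) :
  polymx X -> polymx (fun W => mcast (X W) : 'M_(r', c')).
Proof.
move=> pX i j; apply: (polyfun_ext (g := fun W => mget (X W) i j)).
  by move=> W; rewrite mxE.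
rewrite /mget; case: (insub (val i) : option 'I_r) => [i'|];
  case: (insub (val j) : option 'I_c) => [j'|]; by [apply: pX | constructor].
Qed.

Lemma polyfun_curve (f : Rep k Q beta -> k) (Phi : k -> Rep k Q beta) :
  pf f -> (forall a i j, exists q : {poly k}, forall t, Phi t a i j = q.[t]) ->
  exists q : {poly k}, forall t, f (Phi t) = q.[t].
Proof.
move=> hf hPhi; elim: hf.
- by move=> c; exists c%:P => t; rewrite hornerC.
- exact: hPhi.
- by move=> f1 f2 _ [q1 h1] _ [q2 h2]; exists (q1 + q2) => t; rewrite hornerD h1 h2.
- by move=> f1 f2 _ [q1 h1] _ [q2 h2]; exists (q1 * q2) => t; rewrite hornerM h1 h2.
Qed.
End PolynomialFunctions.

Lemma polyfun_comp (k : fieldType) (Q Q' : quiver) (beta : qV Q -> nat)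
  (beta' : qV Q' -> nat) (f : Rep k Q beta -> k) (Psi : Rep k Q' beta' -> Rep k Q beta) :
  polyfun k Q beta f -> (forall a, polymx (fun W => Psi W a)) ->
  polyfun k Q' beta' (fun W => f (Psi W)).
Proof.
move=> hf hPsi; elim: hf => [c|a i j|f1 f2 _ h1 _ h2|f1 f2 _ h1 _ h2].
- by constructor.
- exact: hPsi.
- exact: pf_add.
- exact: pf_mul.
Qed.

Section Transfer.
Variables (k : fieldType) (Q Q' : quiver).
Variables (beta : qV Q -> nat) (beta' : qV Q' -> nat).
Variables (sigma : qV Q -> int) (sigma' : qV Q' -> int).
Variables (pi : Rep k Q beta -> Rep k Q' beta') (lift : Rep k Q' beta' -> Rep k Q beta).
Variables (res : GLfam k Q beta -> GLfam k Q' beta') (ext : GLfam k Q' beta' -> GLfam k Q beta).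

Hypothesis pi_lift : forall W', pi (lift W') = W'.
Hypothesis SI_factor : forall f, SI k Q beta sigma f -> forall W, f W = f (lift (pi W)).
Hypothesis pi_act : forall g W, is_GL k Q beta g ->
  pi (act k Q beta (GLinv k Q beta g) W) = act k Q' beta' (GLinv k Q' beta' (res g)) (pi W).
Hypothesis res_GL : forall g, is_GL k Q beta g -> is_GL k Q' beta' (res g).
Hypothesis ext_GL : forall g', is_GL k Q' beta' g' -> is_GL k Q beta (ext g').
Hypothesis res_ext : forall g', res (ext g') = g'.
Hypothesis charac_res : forall g, charac k Q beta sigma g = charac k Q' beta' sigma' (res g).
Hypothesis polymx_lift : forall a, polymx (fun W' => lift W' a).
Hypothesis polymx_pi : forall e, polymx (fun W => pi W e).

Lemma SI_lift f : SI k Q beta sigma f -> SI k Q' beta' sigma' (fun W' => f (lift W')).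
Proof.
move=> [hf hSI]; split; first exact: polyfun_comp.
move=> g' gGL W'; have gG := ext_GL gGL.
rewrite -{1}(pi_lift W') -{1}(res_ext g') -pi_act // -SI_factor //.
by rewrite hSI // charac_res res_ext.
Qed.

Lemma SI_pi f' : SI k Q' beta' sigma' f' -> SI k Q beta sigma (fun W => f' (pi W)).
Proof.
move=> [hf' hSI']; split; first exact: polyfun_comp.
by move=> g gGL W; rewrite pi_act // hSI' ?charac_res //; apply: res_GL.
Qed.

Theorem SI_iso_transfer : SI_iso k Q beta sigma Q' beta' sigma'.
Proof.
exists (fun f W' => f (lift W')); split => //.
- exact: SI_lift.
- move=> f1 f2 h1 h2 e; apply: functional_extensionality => W.
  by rewrite (SI_factor h1) (SI_factor h2); exact: (congr1 (fun F => F (pi W)) e).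
- move=> f' hf'; exists (fun W => f' (pi W)); first exact: SI_pi.
  by apply: functional_extensionality => W'; rewrite pi_lift.
Qed.
End Transfer.

(* Since sigma(v0) = 0, the vertex v0 does not
   contribute to the character, so elements of GL(beta) supported at v0 act
   on SI(Q, beta)_sigma trivially. *)
Section VertexRestriction.
Variables (k : fieldType) (Q : quiver) (v0 : qV Q) (beta : qV Q -> nat).
Variable sigma : qV Q -> int.
Hypothesis hsigma : sigma v0 = 0.

Local Notation GLbar := (forall x : barV Q v0, 'M[k]_(beta (val x))).

Definition resGL (g : GLfam k Q beta) : GLbar := fun x => g (val x).

Definition extGL (g' : GLbar) : GLfam k Q beta :=
  fun x => match (insub x : option (barV Q v0)) with
           | Some x' => mcast (g' x') | None => 1%:M end.

Lemma extGL_GL (g' : GLbar) : (forall x, g' x \in unitmx) -> is_GL k Q beta (extGL g').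
Proof.
move=> h x; rewrite /extGL; case: insubP => [x' _ ex|_]; last exact: unitmx1.
by subst x; rewrite mcast_id; apply: h.
Qed.

Lemma resGL_extGL (g' : GLbar) : resGL (extGL g') = g'.
Proof. by apply: functional_extensionality_dep => x; rewrite /resGL /extGL valK mcast_id. Qed.

Lemma charac_resGL g : charac k Q beta sigma g =
  \prod_(x : barV Q v0) \det (resGL g x) ^ sigma (val x).
Proof.
rewrite /charac (bigD1 v0) //= hsigma expr0z mul1r.
rewrite (reindex_omap (val : barV Q v0 -> qV Q) insub); last first.
  by move=> x nx; rewrite insubT.
by apply: eq_bigl => -[x hx] /=; rewrite insubT hx /= eqxx.
Qed.

Definition GLat (G : 'M[k]_(beta v0)) : GLfam k Q beta :=
  fun x => if x == v0 then mcast G else 1%:M.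

Lemma GLat_GL G : G \in unitmx -> is_GL k Q beta (GLat G).
Proof.
move=> uG x; rewrite /GLat; case: eqP => [ex|_]; last exact: unitmx1.
by apply: mcast_unit => //; rewrite ex.
Qed.

Lemma charac_GLat G : charac k Q beta sigma (GLat G) = 1.
Proof.
apply: big1 => x _; rewrite /GLat; case: eqP => [->|_]; first by rewrite hsigma expr0z.
by rewrite det1 exp1rz.
Qed.
End VertexRestriction.

Section Update.
Variables (k : fieldType) (Q : quiver) (beta : qV Q -> nat).
Variables (P : pred (qA Q)) (b : qA Q) (rA cA : {a | P a} -> nat).

Definition upd (W : Rep k Q beta) (B : 'M[k]_(beta (qh b), beta (qt b)))
  (A : forall a : {a | P a}, 'M[k]_(rA a, cA a)) : Rep k Q beta :=
  fun a => match (insub a : option {a | P a}) with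
           | Some a' => mcast (A a')
           | None => if a == b then mcast B else W a end.

Lemma upd_id (erA : forall a, rA a = beta (qh (val a)))
  (ecA : forall a, cA a = beta (qt (val a))) W :
  upd W (W b) (fun a => mcast (W (val a))) = W.
Proof.
apply: functional_extensionality_dep => a; rewrite /upd.
case: insubP => [a' _ <-|_]; first exact: mcastK.
by case: eqP => [->|//]; exact: mcast_id.
Qed.

Lemma upd_curve (f : Rep k Q beta -> k) W : polyfun k Q beta f ->
  forall (PB : 'M[{poly k}]_(beta (qh b), beta (qt b)))
         (PA : forall a, 'M[{poly k}]_(rA a, cA a)),
  exists q : {poly k}, forall t, f (upd W (mxeval t PB) (fun a => mxeval t (PA a))) = q.[t].
Proof.
move=> hf PB PA; apply: polyfun_curve => // a i j; rewrite /upd.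
case: insubP => [a' _ _|_].
  by exists (mget (PA a') i j) => t; rewrite mxE mget_mxeval.
case: eqP => _; first by exists (mget PB i j) => t; rewrite mxE mget_mxeval.
by exists (W a i j)%:P => t; rewrite hornerC.
Qed.
End Update.

(* Writing B = W(b) (m x n) and A_i = W(a_i), the semi-invariants
   only see the products B A_i, which are the matrices of the arrows b a_i of
   Qbar. *)
Section Forward.
Variable k : fieldType.
Hypothesis hchar : [pchar k] =i pred0.
Variables (Q : quiver) (b : qA Q).
Variables (hw : qh b != qt b) (beta : qV Q -> nat) (sigma : qV Q -> int).
Hypotheses (hbeta : (beta (qh b) <= beta (qt b))%N) (hsigma : sigma (qt b) = 0).
Hypothesis b_unique : forall a : qA Q, qt a = qt b -> a = b.

Local Notation v0 := (qt b).
Local Notation QB := (Qbar Q (qt b) (qh b) hw).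
Local Notation betab := (restr (qt b) beta).
Local Notation n := (beta (qt b)).
Local Notation m := (beta (qh b)).
Local Notation IA := {a : qA Q | inP Q (qt b) a}.
Local Notation KA := {a : qA Q | keepP Q (qt b) a}.
Local Notation E := (pid_mx m : 'M[k]_(m, n)).
Local Notation updF W B A :=
  (@upd k Q beta (inP Q v0) b (fun _ => n) (fun a => beta (qt (val a))) W B A).

Definition contract_fwd (W : Rep k Q beta) : Rep k QB betab :=
  fun e => match e as e0 return 'M[k]_(betab (@qh QB e0), betab (@qt QB e0)) with
   | inl a' => W (val a')
   | inr a' => W b *m mcast (W (val a'))
   end.

Definition expand_fwd (W' : Rep k QB betab) : Rep k Q beta :=
  fun a => match (insub a : option KA) with
   | Some a' => mcast (W' (inl a'))
   | None => match (insub a : option IA) with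
             | Some a' => mcast (E^T *m W' (inr a'))
             | None => mcast E end end.

Lemma arrow_cases_fwd a : ~~ keepP Q v0 a -> ~~ inP Q v0 a -> a = b.
Proof.
rewrite /keepP /inP negb_and !negbK => /orP [/eqP/b_unique //|hh].
by rewrite hh /= negbK => /eqP /b_unique.
Qed.

Lemma act_upd_fwd W B A G : G \in unitmx ->
  act k Q beta (GLinv k Q beta (GLat G)) (updF W B A) =
  updF W (B *m G) (fun i => invmx G *m A i).
Proof.
move=> uG; apply: functional_extensionality_dep => a; rewrite /act /GLinv invmxK /upd.
case: insubP => [a' ha' ea|ha].
  subst a; have /andP [/eqP h1 h2] := ha'; rewrite /GLat h1 eqxx (negPf h2) mulmx1.
  by apply: mcast_invmull; rewrite ?h1.
case: eqP => [->|nab]; first by rewrite /GLat eqxx (negPf hw) invmx1 mul1mx !mcast_id.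
have ht : qt a != v0 by apply/eqP => /b_unique.
have hh : qh a != v0 by apply: contra ha => hh; rewrite /inP hh ht.
by rewrite /GLat (negPf ht) (negPf hh) invmx1 mul1mx mulmx1.
Qed.

Lemma upd_normal_form_fwd W :
  updF W E (fun a' => E^T *m (W b *m mcast (W (val a')))) = expand_fwd (contract_fwd W).
Proof.
apply: functional_extensionality_dep => a; rewrite /upd /expand_fwd.
case: (insubP (_ : subType (keepP Q v0)) a) => [a1 ha1 ea1|ha1];
  case: (insubP (_ : subType (inP Q v0)) a) => [a2 ha2 ea2|ha2].
- by move: ha1 ha2; rewrite /keepP /inP -ea2 => /andP [_ /negPf ->] /andP [].
- subst a; have nb : val a1 != b by apply: contraTneq ha1 => ->; rewrite /keepP eqxx.
  by rewrite (negPf nb) /= mcast_id.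
- by [].
- by rewrite (arrow_cases_fwd ha1 ha2) eqxx.
Qed.

Lemma SI_factor_fwd f : SI k Q beta sigma f -> forall W, f W = f (expand_fwd (contract_fwd W)).
Proof.
move=> [hf hSI] W.
have hinv : forall G : 'M[k]_n, G \in unitmx -> forall B A,
    f (updF W (B *m G) (fun i => invmx G *m A i)) = f (updF W B A).
  by move=> G uG B A; rewrite -act_upd_fwd // hSI ?charac_GLat ?mul1r //; exact: GLat_GL.
have eqA (a : IA) : n = beta (qh (val a)) by case/andP: (valP a) => /eqP ->.
rewrite -{1}(upd_id b eqA (fun _ => erefl) W).
by rewrite (invariant_normal_form hchar hbeta (upd_curve W hf) hinv) upd_normal_form_fwd.
Qed.

(* expand is a section of contract, since E E^T = 1. *)
Lemma contract_expand_fwd W' : contract_fwd (expand_fwd W') = W'.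
Proof.
apply: functional_extensionality_dep => -[a'|a'] /=.
  by rewrite /expand_fwd valK; apply: mcast_id.
have hk : ~~ keepP Q v0 (val a') by case/andP: (valP a') => h _; rewrite /keepP h andbF.
have b_out : ~~ keepP Q v0 b /\ ~~ inP Q v0 b by rewrite /keepP /inP eqxx (negPf hw).
rewrite /expand_fwd (insubN _ b_out.1) (insubN _ b_out.2) (insubN _ hk) valK mcast_id.
rewrite mcastK; first by rewrite mulmxA (pid_mx_tr k hbeta) mul1mx.
  by case/andP: (valP a') => /eqP ->.
by [].
Qed.

(* contract is GL-equivariant; the factor g(v0) cancels in the composite. *)
Lemma contract_act_fwd g W : is_GL k Q beta g ->
  contract_fwd (act k Q beta (GLinv k Q beta g) W) =
  act k QB betab (GLinv k QB betab (resGL g)) (contract_fwd W).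
Proof.
move=> gGL; apply: functional_extensionality_dep => -[a'|a'] //=.
have e : qh (val a') = v0 by case/andP: (valP a') => /eqP.
rewrite /act /GLinv /resGL !invmxK /= (mcast_conjl (fun x => invmx (g x)) e).
by rewrite !mulmxA (mulmxK (gGL _)).
Qed.

Lemma polymx_expand_fwd a : polymx (fun W' : Rep k QB betab => expand_fwd W' a).
Proof.
rewrite /expand_fwd; case: insubP => [a' _ _|_].
  exact/polymx_mcast/polymx_coord.
case: insubP => [a' _ _|_]; last exact/polymx_mcast/polymx_const.
exact/polymx_mcast/polymx_mul/polymx_coord/polymx_const.
Qed.

Lemma polymx_contract_fwd e : polymx (fun W => contract_fwd W e).
Proof.
case: e => a' /=; first exact: polymx_coord.
exact/polymx_mul/polymx_mcast/polymx_coord/polymx_coord.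
Qed.

Theorem SI_iso_fwd : SI_iso k Q beta sigma QB betab (restr v0 sigma).
Proof.
apply: (SI_iso_transfer (Q' := QB) (beta' := betab) (pi := contract_fwd) (lift := expand_fwd)
  (res := @resGL k Q v0 beta) (ext := @extGL k Q v0 beta)).
- exact: contract_expand_fwd.
- exact: SI_factor_fwd.
- exact: contract_act_fwd.
- by move=> g gGL x; apply: gGL.
- exact: extGL_GL.
- exact: resGL_extGL.
- exact: charac_resGL.
- exact: polymx_expand_fwd.
- exact: polymx_contract_fwd.
Qed.
End Forward.

(* Now B = W(b) is n x m, the products A_i B are the matrices of the
   arrows a_i b of Qbar_rev, and W' lifts by putting E^T on b and W'(a_i b) E
   on a_i. *)
Section Reverse.
Variable k : fieldType.
Hypothesis hchar : [pchar k] =i pred0.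
Variables (Q : quiver) (b : qA Q).
Variables (hw : qt b != qh b) (beta : qV Q -> nat) (sigma : qV Q -> int).
Hypotheses (hbeta : (beta (qt b) <= beta (qh b))%N) (hsigma : sigma (qh b) = 0).
Hypothesis b_unique : forall a : qA Q, qh a = qh b -> a = b.

Local Notation v0 := (qh b).
Local Notation QB := (Qbar_rev Q (qh b) (qt b) hw).
Local Notation betab := (restr (qh b) beta).
Local Notation n := (beta (qh b)).
Local Notation m := (beta (qt b)).
Local Notation OA := {a : qA Q | outP Q (qh b) a}.
Local Notation KA := {a : qA Q | keepP Q (qh b) a}.
Local Notation E := (pid_mx m : 'M[k]_(m, n)).
Local Notation updR W B A :=
  (@upd k Q beta (outP Q v0) b (fun a => beta (qh (val a))) (fun _ => n) W B A).

Definition contract_rev (W : Rep k Q beta) : Rep k QB betab :=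
  fun e => match e as e0 return 'M[k]_(betab (@qh QB e0), betab (@qt QB e0)) with
   | inl a' => W (val a')
   | inr a' => mcast (W (val a')) *m W b
   end.

Definition expand_rev (W' : Rep k QB betab) : Rep k Q beta :=
  fun a => match (insub a : option KA) with
   | Some a' => mcast (W' (inl a'))
   | None => match (insub a : option OA) with
             | Some a' => mcast (W' (inr a') *m E)
             | None => mcast E^T end end.

Lemma arrow_cases_rev a : ~~ keepP Q v0 a -> ~~ outP Q v0 a -> a = b.
Proof.
rewrite /keepP /outP negb_and !negbK => /orP [hh|/eqP/b_unique //].
by rewrite hh /= negbK => /eqP /b_unique.
Qed.

Lemma act_upd_rev W B A G : G \in unitmx ->
  act k Q beta (GLinv k Q beta (GLat G)) (updR W B A) =
  updR W (invmx G *m B) (fun i => A i *m G).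
Proof.
move=> uG; apply: functional_extensionality_dep => a; rewrite /act /GLinv invmxK /upd.
case: insubP => [a' ha' ea|ha].
  subst a; have /andP [/eqP h1 h2] := ha'; rewrite /GLat h1 eqxx (negPf h2).
  by rewrite invmx1 mul1mx; apply: mcast_mulr; rewrite ?h1.
case: eqP => [->|nab]; first by rewrite /GLat eqxx (negPf hw) mulmx1 !mcast_id.
have hh : qh a != v0 by apply/eqP => /b_unique.
have ht : qt a != v0 by apply: contra ha => ht; rewrite /outP ht hh.
by rewrite /GLat (negPf ht) (negPf hh) invmx1 mul1mx mulmx1.
Qed.

Lemma upd_normal_form_rev W :
  updR W E^T (fun a' => mcast (W (val a')) *m W b *m E) = expand_rev (contract_rev W).
Proof.
apply: functional_extensionality_dep => a; rewrite /upd /expand_rev.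
case: (insubP (_ : subType (keepP Q v0)) a) => [a1 ha1 ea1|ha1];
  case: (insubP (_ : subType (outP Q v0)) a) => [a2 ha2 ea2|ha2].
- by move: ha1 ha2; rewrite /keepP /outP -ea2 => /andP [/negPf -> _] /andP [].
- subst a; have nb : val a1 != b by apply: contraTneq ha1 => ->; rewrite /keepP eqxx andbF.
  by rewrite (negPf nb) /= mcast_id.
- by [].
- by rewrite (arrow_cases_rev ha1 ha2) eqxx.
Qed.

Lemma SI_factor_rev f : SI k Q beta sigma f -> forall W, f W = f (expand_rev (contract_rev W)).
Proof.
move=> [hf hSI] W.
have hinv : forall G : 'M[k]_n, G \in unitmx -> forall B A,
    f (updR W (invmx G *m B) (fun i => A i *m G)) = f (updR W B A).
  by move=> G uG B A; rewrite -act_upd_rev // hSI ?charac_GLat ?mul1r //; exact: GLat_GL.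
have eqA (a : OA) : n = beta (qt (val a)) by case/andP: (valP a) => /eqP ->.
rewrite -{1}(upd_id b (fun _ => erefl) eqA W).
by rewrite (invariant_normal_form_tr hchar hbeta (upd_curve W hf) hinv) upd_normal_form_rev.
Qed.

(* expand is a section of contract, since E E^T = 1. *)
Lemma contract_expand_rev W' : contract_rev (expand_rev W') = W'.
Proof.
apply: functional_extensionality_dep => -[a'|a'] /=.
  by rewrite /expand_rev valK; apply: mcast_id.
have hk : ~~ keepP Q v0 (val a') by case/andP: (valP a') => h _; rewrite /keepP h.
have b_out : ~~ keepP Q v0 b /\ ~~ outP Q v0 b by rewrite /keepP /outP eqxx andbF (negPf hw).
rewrite /expand_rev (insubN _ b_out.1) (insubN _ b_out.2) (insubN _ hk) valK mcast_id.
rewrite mcastK; first by rewrite -mulmxA (pid_mx_tr k hbeta) mulmx1.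
  by [].
by case/andP: (valP a') => /eqP ->.
Qed.

(* contract is GL-equivariant; the factor g(v0) cancels in the composite. *)
Lemma contract_act_rev g W : is_GL k Q beta g ->
  contract_rev (act k Q beta (GLinv k Q beta g) W) =
  act k QB betab (GLinv k QB betab (resGL g)) (contract_rev W).
Proof.
move=> gGL; apply: functional_extensionality_dep => -[a'|a'] //=.
have e : qt (val a') = v0 by case/andP: (valP a') => /eqP.
rewrite /act /GLinv /resGL !invmxK /= (mcast_conjr g e).
by rewrite !mulmxA (mulmxK (gGL _)).
Qed.

Lemma polymx_expand_rev a : polymx (fun W' : Rep k QB betab => expand_rev W' a).
Proof.
rewrite /expand_rev; case: insubP => [a' _ _|_].
  exact/polymx_mcast/polymx_coord.
case: insubP => [a' _ _|_]; last exact/polymx_mcast/polymx_const.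
exact/polymx_mcast/polymx_mul/polymx_const/polymx_coord.
Qed.

Lemma polymx_contract_rev e : polymx (fun W => contract_rev W e).
Proof.
case: e => a' /=; first exact: polymx_coord.
exact/polymx_mul/polymx_coord/polymx_mcast/polymx_coord.
Qed.

Theorem SI_iso_rev : SI_iso k Q beta sigma QB betab (restr v0 sigma).
Proof.
apply: (SI_iso_transfer (Q' := QB) (beta' := betab) (pi := contract_rev)
  (lift := expand_rev) (res := @resGL k Q v0 beta) (ext := @extGL k Q v0 beta)).
- exact: contract_expand_rev.
- exact: SI_factor_rev.
- exact: contract_act_rev.
- by move=> g gGL x; apply: gGL.
- exact: extGL_GL.
- exact: resGL_extGL.
- exact: charac_resGL.
- exact: polymx_expand_rev.
- exact: polymx_contract_rev.
Qed.
End Reverse.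

Unset Implicit Arguments.

Theorem lemma4p6 (k : closedFieldType) (hchar : [pchar k] =i pred0)
  (Q : quiver) (hacyc : acyclic Q) (v0 w : qV Q) (hw : w != v0) (b : qA Q)
  (beta : qV Q -> nat) (sigma : qV Q -> int)
  (hbeta : (beta w <= beta v0)%N) (hsigma : sigma v0 = 0%R) :
  (* forward orientation: arrows a_i : v_i -> v0, unique arrow b : v0 -> w *)
  ((qt b = v0 /\ qh b = w /\ (forall a : qA Q, qt a = v0 -> a = b)) ->
   SI_iso k Q beta sigma (Qbar Q v0 w hw) (restr v0 beta) (restr v0 sigma))
  /\
  (* reversed orientation: arrows a_i : v0 -> v_i, unique arrow b : w -> v0 *)
  ((qh b = v0 /\ qt b = w /\ (forall a : qA Q, qh a = v0 -> a = b)) ->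
   SI_iso k Q beta sigma (Qbar_rev Q v0 w hw) (restr v0 beta) (restr v0 sigma)).
Proof.
split.
- move=> [tb [hb b_unique]]; subst v0 w.
  exact: (SI_iso_fwd hchar hw hbeta hsigma b_unique).
- move=> [hb [tb b_unique]]; subst v0 w.
  exact: (SI_iso_rev hchar hw hbeta hsigma b_unique).
Qed.
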